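(* Let $(V,\omega)$ be a nondegenerate simple CFT type vertex operator algebra generated by $V_1$ and satisfying condition (T). If $\tilde\omega\in\operatorname{Sc}(V,\omega)$ with $\tilde\omega\ne0$ and $\tilde\omega\ne\omega$, then $\dim C_V(C_V(\langle\tilde\omega\rangle))_1>0$ and $\dim C_V(\langle\tilde\omega\rangle)_1>0$.
   Context: Nondegenerate simple CFT type: $V$ simple, $V=\bigoplus_{n\ge0}V_n$, $V_0=\mathbb C\mathbf 1$, and the form $u_1v=\langle u,v\rangle\mathbf 1$ on $V_1$ is nondegenerate. Semi-conformal vector of $(V,\omega)$: conformal vector $\tilde\omega$ of a vertex operator subalgebra $(U,\tilde\omega)$ with $\omega_n|_U=\tilde\omega_n|_U$ for $n\ge0$; $\operatorname{Sc}(V,\omega)$ is the set of these. $C_V(U)=\{v:u_nv=0\ \forall u\in U,n\ge0\}$ (graded, with weight-one part $C_V(U)_1$); $\langle\tilde\omega\rangle$ is the vertex subalgebra generated by $\tilde\omega$. Condition (T): for every $\tilde\omega\in\operatorname{Sc}(V,\omega)$, the natural map $C_V(C_V(\langle\tilde\omega\rangle))\otimes C_V(\langle\tilde\omega\rangle)\to V$, $u\otimes v\mapsto u_{-1}v$, is an isomorphism of vertex operator algebras. *)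

From HB Require Import structures.
From mathcomp Require Import all_boot all_order all_algebra.
Set Implicit Arguments. Unset Strict Implicit. Unset Printing Implicit Defensive.
Import Order.TTheory GRing.Theory Num.Theory.
Local Open Scope ring_scope.

Section VOA.
Variable F : fieldType.
Variable V : lmodType F.
(* Y n u v  is the n-th product  u_n v  (Y(u,z) = sum_n u_n z^{-n-1}). *)
Variable Y : int -> V -> V -> V.
Variable vac : V.

Definition binz (p : int) (i : nat) : F :=
  (\prod_(j < i) (p%:~R - j%:R)) / (i`!)%:R.

Definition va_bilinear : Prop :=
  (forall n a u u' v, Y n (a *: u + u') v = a *: Y n u v + Y n u' v) /\
  (forall n a u v v', Y n u (a *: v + v') = a *: Y n u v + Y n u v').

Definition va_truncation : Prop :=
  forall u v, exists N : nat, forall n : int, (N%:Z <= n)%R -> Y n u v = 0.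

Definition va_vacuum : Prop :=
  (forall (n : int) v, Y n vac v = if n == -1 then v else 0) /\
  (forall u, Y (-1) u vac = u) /\
  (forall u (n : nat), Y n%:Z u vac = 0).

(* Borcherds (Jacobi) identity; all sums are finite by truncation, so it is
   stated for all sufficiently large summation bounds. *)
Definition va_borcherds : Prop :=
  forall (u v w : V) (p q r : int), exists N : nat, forall M : nat, (N <= M)%N ->
    \sum_(i < M) binz p i *: Y (p + q - i%:Z) (Y (r + i%:Z) u v) w =
    \sum_(i < M) ((-1) ^+ i) *:
       (binz r i *: (Y (p + r - i%:Z) u (Y (q + i%:Z) v w)
        - ((-1) ^+ `|r|%N) *: Y (q + r - i%:Z) v (Y (p + i%:Z) u w))).

Definition is_VA : Prop :=
  [/\ va_bilinear, va_truncation, va_vacuum & va_borcherds].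

Definition Dop (u : V) : V := Y (-2) u vac.

(* finite-dimensionality of a subset: contained in the span of a finite list *)
Definition in_span (s : seq V) (v : V) : Prop :=
  exists c : 'I_(size s) -> F, v = \sum_(i < size s) c i *: s`_i.

Definition subspace (S : V -> Prop) : Prop :=
  [/\ S 0, (forall u v, S u -> S v -> S (u + v)) & (forall a u, S u -> S (a *: u))].

Definition is_subalg (S : V -> Prop) : Prop :=
  [/\ subspace S, S vac & forall u v (n : int), S u -> S v -> S (Y n u v)].

Definition is_ideal (I : V -> Prop) : Prop :=
  subspace I /\ forall u v (n : int), I v -> I (Y n u v) /\ I (Y n v u).

Definition wt (U : V -> Prop) (w : V) (n : int) (u : V) : Prop :=
  U u /\ Y 1 w u = n%:~R *: u.

(* w is a conformal vector making the vertex subalgebra U a vertex operator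
   algebra: Virasoro relations with some central charge, L(-1) = D on U,
   U = (+)_n U_n with L(0) = w_1 grading, dim U_n finite, U_n = 0 for n << 0. *)
Definition is_conformal (U : V -> Prop) (w : V) : Prop :=
  [/\ U w,
      (exists c : F, [/\ Y 3 w w = (c / 2%:R) *: vac, Y 2 w w = 0,
                         Y 1 w w = 2%:R *: w, Y 0 w w = Dop w &
                         forall n : nat, Y (n%:Z + 4) w w = 0]),
      (forall u, U u -> Y 0 w u = Dop u),
      (forall u, U u -> exists (m : int) (N : nat) (f : 'I_N -> V),
           (forall i : 'I_N, wt U w (m + (nat_of_ord i)%:Z) (f i)) /\ u = \sum_(i < N) f i) &
      ((forall n, exists s : seq V, forall u, wt U w n u -> in_span s u) /\
      (exists n0 : int, forall n u, (n < n0)%R -> wt U w n u -> u = 0))].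

Definition full (_ : V) : Prop := True.

Definition is_VOA (om : V) : Prop := is_VA /\ is_conformal full om.

Definition Vwt (om : V) (n : int) (u : V) : Prop := Y 1 om u = n%:~R *: u.

Definition CFT_type (om : V) : Prop :=
  (forall n u, (n < 0)%R -> Vwt om n u -> u = 0) /\
  (forall u, Vwt om 0 u -> exists a : F, u = a *: vac).

(* the form u_1 v = <u,v> 1 on V_1 is nondegenerate *)
Definition nondeg_form (om : V) : Prop :=
  forall u, Vwt om 1 u -> (forall v, Vwt om 1 v -> Y 1 u v = 0) -> u = 0.

Definition simple : Prop :=
  vac <> 0 /\
  forall I, is_ideal I -> (forall v, I v -> v = 0) \/ (forall v, I v).

Definition generated_by_V1 (om : V) : Prop :=
  forall S, is_subalg S -> (forall v, Vwt om 1 v -> S v) -> forall v, S v.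

Definition gen (w : V) (v : V) : Prop :=
  forall S, is_subalg S -> S w -> S v.

Definition commutant (U : V -> Prop) (v : V) : Prop :=
  forall u, U u -> forall n : nat, Y n%:Z u v = 0.

Definition semiconformal (om w : V) : Prop :=
  exists U : V -> Prop, [/\ is_subalg U, is_conformal U w &
    forall u (n : nat), U u -> Y n%:Z om u = Y n%:Z w u].

(* The map A (x) B -> V, a (x) b |-> a_{-1} b, is an isomorphism of vertex
   operator algebras (A, wA) (x) (B, wB) ~ (V, om), written without the
   (unavailable) tensor product of infinite-dimensional spaces. *)
Definition tensor_iso (om : V) (A B : V -> Prop) : Prop :=
  [/\ (* A and B are VOAs whose tensor-product conformal vector maps to om *)
      (exists wA wB, [/\ is_subalg A, is_subalg B, is_conformal A wA,
                        is_conformal B wB & om = Y (-1) wA vac + Y (-1) vac wB]),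
      (* vertex algebra homomorphism:
         phi((a(x)b)_n (a'(x)b')) = sum_{i in Z} (a_i a')_{-1} (b_{n-1-i} b') *)
      (forall a a' b b' (n : int), A a -> A a' -> B b -> B b' ->
         exists N : nat, forall M : nat, (N <= M)%N ->
           Y n (Y (-1) a b) (Y (-1) a' b') =
           \sum_(k < (M + M).+1)
              Y (-1) (Y (k%:Z - M%:Z) a a') (Y (n - 1 - (k%:Z - M%:Z)) b b')),
      (forall v, exists (N : nat) (a b : 'I_N -> V),
          (forall i, A (a i) /\ B (b i)) /\ v = \sum_(i < N) Y (-1) (a i) (b i)) &
      (* injective on A (x) B *)
      (forall (N : nat) (a b : 'I_N -> V), (forall i, A (a i) /\ B (b i)) ->
          (forall c : 'I_N -> F, \sum_(i < N) c i *: a i = 0 -> forall i, c i = 0) ->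
          \sum_(i < N) Y (-1) (a i) (b i) = 0 -> forall i, b i = 0)].

Definition condition_T (om : V) : Prop :=
  forall w, semiconformal om w ->
    tensor_iso om (commutant (commutant (gen w))) (commutant (gen w)).

End VOA.

(* By (T), V = A (x) B with A = C_V(C_V(<w>)), B = C_V(<w>) and om = wA (x) 1 + 1 (x) wB.
   Both factors have nonnegative weights and one-dimensional weight-zero spaces, so every
   weight-one vector of V is a sum of weight-one vectors of A and of B.  If A_1 = 0, then
   V_1 lies in B, hence B = V because V_1 generates V; then w commutes with itself, which
   contradicts w_1 w = 2 w <> 0.  If B_1 = 0, then A = V.  By skew symmetry w acts on om as
   on itself, so om - w lies in B = C_V(<w>), hence in A and B; but A (x) B -> V injective
   forces A and B to meet only in the line of the vacuum, and om - w has weight 2, so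
   om - w = 0. *)

From HB Require Import structures.
From mathcomp Require Import all_boot all_order all_algebra zify.
From Stdlib Require Import Classical.
Import Order.TTheory GRing.Theory Num.Theory.
Local Open Scope ring_scope.
Set Implicit Arguments. Unset Strict Implicit.

Lemma eigen_sum_eq0 (F : fieldType) (V : lmodType F) (f : {linear V -> V})
    (lam : F) (s : seq (F * V)) :
  (forall p, p \in s -> f p.2 = p.1 *: p.2 /\ p.1 != lam) ->
  f (\sum_(p <- s) p.2) = lam *: \sum_(p <- s) p.2 -> \sum_(p <- s) p.2 = 0.
Proof.
move: {2}(map fst s) (erefl (map fst s)) => ls.
elim: ls s => [|k ls IH] [|[k' y] s] //=; first by rewrite big_nil.
case=> -> hls hs.
have [fy nk] := hs (k, y) (mem_head _ _).
have hs0 p : p \in s -> f p.2 = p.1 *: p.2 /\ p.1 != lam.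
  by move=> ps; apply: hs; rewrite in_cons ps orbT.
rewrite big_cons /= => fz; set z := y + _ in fz *.
(* [f - k] kills [y] and rescales the other components by [p.1 - k]. *)
pose s' := [seq (p.1, (p.1 - k) *: p.2) | p <- s].
have z'E : \sum_(p <- s') p.2 = (lam - k) *: z.
  rewrite big_map /= scalerBl -fz /z linearD linear_sum fy scalerDr scaler_sumr.
  rewrite opprD addrACA subrr add0r -sumrB; apply: eq_big_seq => p /hs0[fp _].
  by rewrite fp scalerBl.
have : \sum_(p <- s') p.2 = 0.
  apply: IH; first by rewrite -map_comp.
  - move=> p /mapP[q /hs0[fq nq] ->] /=.
    by split=> //; rewrite linearZZ fq !scalerA mulrC.
  - by rewrite z'E linearZZ fz !scalerA mulrC.
move/eqP; rewrite z'E scaler_eq0 subr_eq0 eq_sym (negbTE nk) /=.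
exact/eqP.
Qed.

Lemma sum_shift_delta (T : nmodType) (M : nat) (n : int) (G : int -> T) :
  (absz n <= M)%N -> (forall m, m != n -> G m = 0) ->
  \sum_(k < (M + M).+1) G (k%:Z - M%:Z) = G n.
Proof.
move=> nM G0; have kM : (absz (n + M%:Z)%R < (M + M).+1)%N by lia.
rewrite (bigD1 (Ordinal kM)) //= big1 ?addr0; first by congr G; lia.
move=> k kn; apply: G0; apply: contraNneq kn => kMn.
by apply/eqP/val_inj => /=; lia.
Qed.

Section VertexAlgebra.
Variables (F : fieldType) (V : lmodType F) (Y : int -> V -> V -> V).

Definition annihilator (x u : V) : Prop := forall n : nat, Y n%:Z u x = 0.

Definition eigen_decomp (f : V -> V) (P : F -> V -> Prop) (v : V) : Prop :=
  exists2 s : seq (F * V),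
    forall p, p \in s -> f p.2 = p.1 *: p.2 /\ P p.1 p.2 & v = \sum_(p <- s) p.2.

(* The last three clauses of [tensor_iso]. *)
Definition tensor_mul (A B : V -> Prop) : Prop :=
  forall a a' b b' (n : int), A a -> A a' -> B b -> B b' ->
    exists N : nat, forall M : nat, (N <= M)%N ->
      Y n (Y (-1) a b) (Y (-1) a' b') =
      \sum_(k < (M + M).+1)
         Y (-1) (Y (k%:Z - M%:Z) a a') (Y (n - 1 - (k%:Z - M%:Z)) b b').

Definition tensor_span (A B : V -> Prop) : Prop :=
  forall v, exists (N : nat) (a b : 'I_N -> V),
    (forall i, A (a i) /\ B (b i)) /\ v = \sum_(i < N) Y (-1) (a i) (b i).

Definition tensor_inj (A B : V -> Prop) : Prop :=
  forall (N : nat) (a b : 'I_N -> V), (forall i, A (a i) /\ B (b i)) ->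
    (forall c : 'I_N -> F, \sum_(i < N) c i *: a i = 0 -> forall i, c i = 0) ->
    \sum_(i < N) Y (-1) (a i) (b i) = 0 -> forall i, b i = 0.

Lemma eigen_decomp_sum f P (I : Type) (r : seq I) (G : I -> V) :
  (forall i, eigen_decomp f P (G i)) -> eigen_decomp f P (\sum_(i <- r) G i).
Proof.
move=> decG; apply: big_ind => //; first by exists [::]; rewrite ?big_nil.
move=> _ _ [s1 hs1 ->] [s2 hs2 ->]; exists (s1 ++ s2); last by rewrite big_cat.
by move=> p; rewrite mem_cat => /orP[/hs1|/hs2].
Qed.

Lemma eigen_decomp_eigenvector (f : {linear V -> V}) P (S : V -> Prop) lam v :
  subspace S -> (forall x, f x = lam *: x -> P lam x -> S x) ->
  f v = lam *: v -> eigen_decomp f P v -> S v.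
Proof.
move=> [S0 SD _] SP fv [s hs vE].
move: vE; rewrite (bigID (fun p => p.1 == lam)) /=.
set v1 := \sum_(p <- s | _) _; set v2 := \sum_(p <- s | _) _ => vE.
have fv1 : f v1 = lam *: v1.
  rewrite linear_sum scaler_sumr big_seq_cond [RHS]big_seq_cond.
  by apply: eq_bigr => p /andP[/hs[fp _] /eqP <-].
have v2_0 : v2 = 0.
  rewrite /v2 -big_filter; apply: (@eigen_sum_eq0 _ _ f lam).
    by move=> p; rewrite mem_filter => /andP[nl /hs[fp _]].
  rewrite big_filter -/v2 (_ : v2 = v - v1); last by rewrite vE addrAC subrr add0r.
  by rewrite linearB fv fv1 scalerBr.
rewrite vE v2_0 addr0 /v1 big_seq_cond; apply: big_ind => //.
by move=> p /andP[/hs[fp Pp] /eqP pl]; apply: SP; rewrite -pl.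
Qed.
End VertexAlgebra.

Lemma binzn0 (F : fieldType) (p : int) : binz F p 0 = 1.
Proof. by rewrite /binz big_ord0 fact0 divr1. Qed.

Lemma binz0S (F : fieldType) (i : nat) : binz F 0 i.+1 = 0.
Proof. by rewrite /binz big_ord_recl subrr !mul0r. Qed.

Section Products.
Variables (F : fieldType) (V : lmodType F) (Y : int -> V -> V -> V) (vac : V).
Hypothesis hbil : va_bilinear Y.

Definition Ylinl n v : {linear V -> V} :=
  HB.pack (Y n ^~ v)
    (GRing.isLinear.Build F V V *:%R (Y n ^~ v) (fun a u u' => hbil.1 n a u u' v)).

Definition Ylinr n u : {linear V -> V} :=
  HB.pack (Y n u) (GRing.isLinear.Build F V V *:%R (Y n u) (fun a => hbil.2 n a u)).

Lemma Y0l n v : Y n 0 v = 0. Proof. exact: raddf0 (Ylinl n v). Qed.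
Lemma Y0r n u : Y n u 0 = 0. Proof. exact: raddf0 (Ylinr n u). Qed.
Lemma YDl n v : {morph Y n ^~ v : u u' / u + u'}. Proof. exact: raddfD (Ylinl n v). Qed.
Lemma YBr n u : {morph Y n u : v v' / v - v'}. Proof. exact: raddfB (Ylinr n u). Qed.
Lemma YZl n a u v : Y n (a *: u) v = a *: Y n u v.
Proof. exact: (linearZZ (Ylinl n v) a u). Qed.
Lemma YZr n a u v : Y n u (a *: v) = a *: Y n u v.
Proof. exact: (linearZZ (Ylinr n u) a v). Qed.

Lemma Y_suml n v (I : Type) (r : seq I) (G : I -> V) :
  Y n (\sum_(i <- r) G i) v = \sum_(i <- r) Y n (G i) v.
Proof. exact: (raddf_sum (Ylinl n v) r xpredT G). Qed.

Lemma Y_sumr n u (I : Type) (r : seq I) (G : I -> V) :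
  Y n u (\sum_(i <- r) G i) = \sum_(i <- r) Y n u (G i).
Proof. exact: (raddf_sum (Ylinr n u) r xpredT G). Qed.

Hypothesis hvac : va_vacuum Y vac.

Lemma vacYE n v : Y n vac v = if n == -1 then v else 0. Proof. exact: hvac.1. Qed.
Lemma vacY v : Y (-1) vac v = v. Proof. by rewrite vacYE. Qed.
Lemma Yvac u : Y (-1) u vac = u. Proof. exact: hvac.2.1. Qed.
Lemma Yvac_nonneg u (n : nat) : Y n%:Z u vac = 0. Proof. exact: hvac.2.2. Qed.

Hypothesis hbor : va_borcherds Y.

(* Borcherds identity with [p = 0]: the commutator formula. *)
Lemma annihilator_subalg x : is_subalg Y vac (annihilator Y x).
Proof.
split; first split.
- by move=> n; rewrite Y0l.
- by move=> u u' hu hu' n; rewrite YDl hu hu' addr0.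
- by move=> a u hu n; rewrite YZl hu scaler0.
- by move=> n; rewrite vacYE.
move=> u v m hu hv n; have [N hN] := hbor u v x 0 n%:Z m.
move: (hN N.+1 (leqnSn N)); rewrite big_ord_recl big1 => [|i _]; last first.
  by rewrite binz0S scale0r.
rewrite addr0 binzn0 scale1r add0r !addr0 => ->.
by apply: big1 => i _; rewrite add0r -PoszD hv Y0r hu Y0r scaler0 subrr !scaler0.
Qed.

(* Borcherds identity with [p = -1], [q = 0]: skew symmetry. *)
Lemma skew_symmetry_nonneg u v (n : nat) :
  exists N : nat, forall M : nat, (N <= M)%N ->
    \sum_(i < M.+1) binz F (-1) i *: Y (-1 - i%:Z) (Y (n%:Z + i%:Z) u v) vac =
    - ((-1) ^+ n *: Y n%:Z v u).
Proof.
have [N hN] := hbor u v vac (-1) 0 n%:Z.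
exists N => M NM; move: (hN M.+1 (leqW NM)); rewrite addr0 => ->.
rewrite big_ord_recl big1 => [|i _]; last first.
  rewrite add0r Yvac_nonneg Y0r lift0 -addn1 PoszD addrCA addNr addr0.
  by rewrite Yvac_nonneg Y0r scaler0 subrr !scaler0.
by rewrite !subr0 !addr0 add0r Yvac_nonneg Y0r sub0r binzn0 expr0 !scale1r Yvac.
Qed.

Lemma Y_nonneg_skew u u' v :
  (forall k : nat, Y k%:Z u v = Y k%:Z u' v) ->
  forall n : nat, Y n%:Z v u = Y n%:Z v u'.
Proof.
move=> uu' n; have [N1 h1] := skew_symmetry_nonneg u v n.
have [N2 h2] := skew_symmetry_nonneg u' v n.
move: (h1 _ (leq_maxl N1 N2)); under eq_bigr do rewrite -PoszD uu' PoszD.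
by rewrite (h2 _ (leq_maxr N1 N2)) => /oppr_inj/(scalerI (negbT (signr_eq0 _ _))).
Qed.

Lemma commutant_gen w x : annihilator Y x w -> commutant Y (gen Y vac w) x.
Proof. by move=> wx u hu; apply: hu (annihilator_subalg x) wx. Qed.

End Products.

Section TensorFactors.
Variables (F : numFieldType) (V : lmodType F) (Y : int -> V -> V -> V) (vac om : V).
Hypotheses (hbil : va_bilinear Y) (hvac : va_vacuum Y vac).
Variables (A B : V -> Prop) (wA wB : V).
Hypotheses (hA : is_subalg Y vac A) (hB : is_subalg Y vac B).
Hypothesis hmul : tensor_mul Y A B.

Lemma Y_tensorl n a a' b' :
  A a -> A a' -> B b' -> Y n a (Y (-1) a' b') = Y (-1) (Y n a a') b'.
Proof.
move=> Aa Aa' Bb'; have [_ Bvac _] := hB.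
have [N hN] := hmul n Aa Aa' Bvac Bb'.
rewrite -{1}(Yvac hvac a) (hN _ (leq_maxl N (absz n))).
pose G m := Y (-1) (Y m a a') (Y (n - 1 - m) vac b').
rewrite (sum_shift_delta (G := G) (leq_maxr _ _)) /G.
  by rewrite (vacYE hvac) addrAC subrr add0r eqxx.
move=> m /eqP mn; rewrite (vacYE hvac); case: eqP => [?|_]; first lia.
by rewrite Y0r.
Qed.

Lemma Y_tensorr n b a' b' :
  B b -> A a' -> B b' -> Y n b (Y (-1) a' b') = Y (-1) a' (Y n b b').
Proof.
move=> Bb Aa' Bb'; have [_ Avac _] := hA.
have [N hN] := hmul n Avac Aa' Bb Bb'.
rewrite -{1}(vacY hvac b) (hN _ (leq_maxl N 1)).
pose G m := Y (-1) (Y m vac a') (Y (n - 1 - m) b b').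
rewrite (sum_shift_delta (G := G) (n := -1) (leq_maxr _ _)) /G.
  by rewrite (vacY hvac) opprK subrK.
move=> m /eqP m1; rewrite (vacYE hvac); case: eqP => [//|_].
by rewrite Y0l.
Qed.

Hypotheses (hcA : is_conformal Y vac A wA) (hcB : is_conformal Y vac B wB).
Hypothesis hom : om = Y (-1) wA vac + Y (-1) vac wB.

Lemma Y1_tensor a b : A a -> B b ->
  Y 1 om (Y (-1) a b) = Y (-1) (Y 1 wA a) b + Y (-1) a (Y 1 wB b).
Proof.
move=> Aa Bb; have [AwA _ _ _ _] := hcA; have [BwB _ _ _ _] := hcB.
by rewrite hom YDl // (Yvac hvac) (vacY hvac) Y_tensorl // Y_tensorr.
Qed.

Lemma tensor_weight a b (al be : int) : A a -> B b ->
  Y 1 wA a = al%:~R *: a -> Y 1 wB b = be%:~R *: b ->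
  Vwt Y om (al + be) (Y (-1) a b).
Proof.
move=> Aa Bb wa wb.
by rewrite /Vwt Y1_tensor // wa wb YZl // YZr // intrD scalerDl.
Qed.

Hypothesis hCFT : CFT_type Y vac om.

Lemma tensor_weight_one a b (al be : int) : A a -> B b ->
  Y 1 wA a = al%:~R *: a -> Y 1 wB b = be%:~R *: b -> al + be = 1 ->
  A (Y (-1) a b) \/ B (Y (-1) a b).
Proof.
move=> Aa Bb wa wb albe.
have [[A0 _ AZ] Avac _] := hA; have [[B0 _ BZ] Bvac _] := hB.
have Vwt_a : Vwt Y om al a.
  rewrite -(Yvac hvac a) -[al]addr0; apply: tensor_weight => //.
  by rewrite (Yvac_nonneg hvac) scale0r.
have Vwt_b : Vwt Y om be b.
  rewrite -(vacY hvac b) -[be]add0r; apply: tensor_weight => //.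
  by rewrite (Yvac_nonneg hvac) scale0r.
case: (ltrP al 0) => [/(hCFT.1 _ _)/(_ Vwt_a) ->|al0]; first by rewrite Y0l //; left.
case: (ltrP be 0) => [/(hCFT.1 _ _)/(_ Vwt_b) ->|be0]; first by rewrite Y0r //; left.
have [al_0|be_0] : al = 0 \/ be = 0 by lia.
  right; move: Vwt_a; rewrite al_0 => /(hCFT.2 a) [c ->].
  by rewrite YZl // (vacY hvac); apply: BZ.
left; move: Vwt_b; rewrite be_0 => /(hCFT.2 b) [c ->].
by rewrite YZr // (Yvac hvac); apply: AZ.
Qed.

Hypothesis hspan : tensor_span Y A B.

Lemma eigen_decomp_tensor v :
  eigen_decomp (Y 1 om) (fun l x => l = 1 -> A x \/ B x) v.
Proof.
have [_ _ _ decA _] := hcA; have [_ _ _ decB _] := hcB.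
have [N [a [b [ab ->]]]] := hspan v.
apply: eigen_decomp_sum => i.
have [/decA[m [Na [fa [wfa ->]]]] /decB[m' [Nb [fb [wfb ->]]]]] := ab i.
rewrite Y_suml //; apply: eigen_decomp_sum => j; rewrite Y_sumr //.
apply: eigen_decomp_sum => k; have [Afa wa] := wfa j; have [Bfb wb] := wfb k.
exists [:: ((m + j + (m' + k))%:~R, Y (-1) (fa j) (fb k))]; last by rewrite big_seq1.
move=> p; rewrite mem_seq1 => /eqP -> /=; split; first exact: tensor_weight.
move=> e; apply: (tensor_weight_one Afa Bfb wa wb); exact: (@intr_inj F).
Qed.

Lemma weight_one_span (S : V -> Prop) : subspace S ->
  (forall x, A x -> Vwt Y om 1 x -> S x) -> (forall x, B x -> Vwt Y om 1 x -> S x) ->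
  forall v, Vwt Y om 1 v -> S v.
Proof.
move=> Ssub SA SB v v1.
apply: (eigen_decomp_eigenvector (f := Ylinr hbil 1 om) (lam := 1) Ssub _ v1
  (eigen_decomp_tensor v)).
by move=> x x1 /(_ erefl) [/SA|/SB]; apply.
Qed.

Hypothesis hinj : tensor_inj Y A B.

Lemma tensor_factors_meet x : vac <> 0 -> A x -> B x -> exists c, x = c *: vac.
Proof.
move=> vac0 Ax Bx; apply: NNPP => xvac.
have [_ Avac _] := hA; have [[_ _ BZ] Bvac _] := hB.
pose a (i : 'I_2) := [:: x; vac]`_i; pose b (i : 'I_2) := [:: vac; - x]`_i.
apply: (vac0); apply: (hinj (a := a) (b := b) _ _ _ ord0).
- case=> [[|[|//]] ?]; rewrite /a /b /=; split=> //.
  by rewrite -scaleN1r; apply: BZ.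
- move=> c; rewrite !big_ord_recl big_ord0 addr0 /a /= => rel.
  have c0 : c ord0 = 0.
    apply: NNPP => c0; apply: xvac; exists (- (c (lift ord0 ord0) / c ord0)).
    apply: (scalerI (a := c ord0)); first exact/eqP.
    rewrite scalerA mulrN mulrCA divff ?mulr1; last exact/eqP.
    by apply/eqP; rewrite scaleNr -addr_eq0 rel.
  move: rel; rewrite c0 scale0r add0r => /eqP.
  rewrite scaler_eq0 => /orP[/eqP c1|/eqP //].
  by case=> [[|[|//]] i2]; [rewrite -c0 | rewrite -c1]; congr c; apply: val_inj.
- by rewrite !big_ord_recl big_ord0 /a /b /= (Yvac hvac) (vacY hvac) addr0 subrr.
Qed.

End TensorFactors.

Unset Implicit Arguments.

Theorem lemma5p3 (F : numClosedFieldType) (V : lmodType F)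
  (Y : int -> V -> V -> V) (vac om : V)
  (hVOA : is_VOA Y vac om)
  (hCFT : CFT_type Y vac om)
  (hnd : nondeg_form Y om)
  (hsimple : simple Y vac)
  (hgen : generated_by_V1 Y vac om)
  (hT : condition_T Y vac om)
  (w : V) (hw : semiconformal Y vac om w) (hw0 : w <> 0) (hwom : w <> om) :
  (exists v, [/\ v <> 0, Vwt Y om 1 v & commutant Y (commutant Y (gen Y vac w)) v]) /\
  (exists v, [/\ v <> 0, Vwt Y om 1 v & commutant Y (gen Y vac w) v]).
Proof.
have [[hbil _ hvac hbor] [_ [_ [_ _ om_wt2 _ _]] _ _ _]] := hVOA.
have [U [_ [Uw [_ [_ _ w_wt2 _ _]] _ _ _] om_w]] := hw.
have [[wA [wB [hA hB hcA hcB hom]]] hmul hspan hinj] := hT w hw.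
set A := commutant Y (commutant Y (gen Y vac w)) in hA hcA hmul hspan hinj *.
set B := commutant Y (gen Y vac w) in hB hcB hmul hspan hinj *.
have [Asub _ _] := hA; have [Bsub _ _] := hB.
have span1 := weight_one_span hbil hvac hA hB hmul hcA hcB hom hCFT hspan.
have no_weight_one (S : V -> Prop) :
    ~ (exists v, [/\ v <> 0, Vwt Y om 1 v & S v]) ->
    forall x, S x -> Vwt Y om 1 x -> x = 0.
  by move=> noS x Sx x1; apply: NNPP => x0; apply: noS; exists x.
have two0 : (2%:R : F) != 0 by rewrite pnatr_eq0.
split; apply: NNPP => /no_weight_one no1.
- have BV : forall v, B v.
    apply: (hgen _ hB); apply: (span1 _ Bsub _ (fun x Bx _ => Bx)).
    by move=> x Ax x1; rewrite (no1 x Ax x1); case: Bsub.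
  move: (BV w w (fun S _ Sw => Sw) 1%N); rewrite w_wt2 => /eqP.
  by rewrite scaler_eq0 (negbTE two0) => /eqP/hw0.
- have AV : forall v, A v.
    apply: (hgen _ hA); apply: (span1 _ Asub (fun x Ax _ => Ax)).
    by move=> x Bx x1; rewrite (no1 x Bx x1); case: Asub.
  pose x := om - w.
  (* [w] acts on [om] as on itself, by skew symmetry from [om_n w = w_n w]. *)
  have Bx : B x.
    apply: (commutant_gen hbil hvac hbor) => n.
    by rewrite YBr // (Y_nonneg_skew hbil hvac hbor (fun k => om_w w k Uw)) subrr.
  have [c xE] := tensor_factors_meet hvac hA hB hinj hsimple.1 (AV x) Bx.
  have : 2%:R *: x = 0.
    rewrite -[LHS](_ : Y 1 om x = _).
      by rewrite xE YZr // (Yvac_nonneg hvac) scaler0.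
    by rewrite YBr // om_wt2 (om_w w 1%N Uw) w_wt2 scalerBr.
  by move/eqP; rewrite scaler_eq0 (negbTE two0) subr_eq0 => /eqP/esym/hwom.
Qed.
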